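(* For all integers $n\ge 4$ and $2\le k\le n/2$, there exists a feasible irredundant (circular) homogeneous PV graph $\vec G_R$ with $n$ sites and $k$ carriers such that $$\mathcal M(\vec G_R)\ \ge\ n(k-1).$$ (This holds even though the agent knows $\vec G_R$, $n$ and $k$ and has unlimited memory.)
   Context: A PV (periodically varying) system consists of a finite set $S$ of $n$ sites and a set $C$ of $k\le n$ carriers. Each carrier $c$ has a route $\pi(c)=\langle x_0,\dots,x_{p(c)-1}\rangle$, a finite sequence of sites of length $p(c)\ge1$ called its period; $\pi(c)[j]=x_{j\bmod p(c)}$. At each time $t\in\mathbb N$ carrier $c$ is at $\pi(c)[t]$ and moves to $\pi(c)[t+1]$. The PV graph $\vec G_R$ is the directed edge-labelled multigraph on $S$ with edges $(x_i,x_{i+1},i)$, $0\le i<p(c)$, for every carrier. The system is homogeneous if all $p(c)$ are equal, heterogeneous otherwise. A route is simple if $\pi(c)[i]\ne\pi(c)[i+1]$ for all $i$ and, whenever $\pi(c)[i]=\pi(c)[j]$ with $0\le i<j<p(c)$, then $\pi(c)[i+1]\ne\pi(c)[j+1]$. A route is irredundant (circular) if it is simple and the directed multigraph it describes is either a simple cycle (the sites $x_0,\dots,x_{p(c)-1}$ are distinct) or a virtual cycle, i.e. the closed walk of a simple traversal of a tree (each tree edge traversed once in each direction); in particular $p(c)\le 2(n-1)$. A PV graph is irredundant if all its routes are irredundant. An exploring agent is injected at time $0$ at a site of $\mathrm{start}(\vec G_R)=\{\pi(c)[0]:c\in C\}$; if at time $t$ it is at site $x$ it must either ride one step with some carrier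 $c$ with $\pi(c)[t]=x$ (one move) or halt; it cannot wait. A strategy solves PVG-Exploration of $\vec G_R$ if from every injection site the agent visits all sites and halts in finite time. $\vec G_R$ is feasible if from the starting point of every carrier some realizable walk visits all sites. For feasible $\vec G_R$, $\mathcal M(\vec G_R)$ denotes the minimum, over all deterministic strategies solving PVG-Exploration of $\vec G_R$ (which may use full knowledge of $\vec G_R$ and unlimited memory), of the maximum over injection sites of the number of moves performed. *)

(* Sites are the naturals 0..n-1, carriers are 0..k-1.
   A PV system is given by n and a list R of k routes (R`_c is the route of carrier c). *)
From mathcomp Require Import all_boot.
Set Implicit Arguments. Unset Strict Implicit. Unset Printing Implicit Defensive.

Definition route (R : seq (seq nat)) (c : nat) : seq nat := nth [::] R c.
Definition period (R : seq (seq nat)) (c : nat) : nat := size (route R c).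
Definition pos (R : seq (seq nat)) (c t : nat) : nat :=
  nth 0 (route R c) (t %% period R c).

Definition PV_system (n : nat) (R : seq (seq nat)) (k : nat) : Prop :=
  size R = k /\ forall c, c < k -> 0 < period R c /\ all (fun x => x < n) (route R c).

Definition homogeneous (R : seq (seq nat)) : Prop :=
  forall c d, c < size R -> d < size R -> period R c = period R d.

Definition simple_route (r : seq nat) : Prop :=
  let p := size r in let x := fun j => nth 0 r (j %% p) in
  (forall i, i < p -> x i <> x i.+1) /\
  (forall i j, i < j -> j < p -> x i = x j -> x i.+1 <> x j.+1).

Definition route_arcs (r : seq nat) : seq (nat * nat) :=
  let p := size r in
  [seq (nth 0 r (i %% p), nth 0 r (i.+1 %% p)) | i <- iota 0 p].

Definition route_edges (r : seq nat) : seq (nat * nat) :=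
  undup [seq (minn e.1 e.2, maxn e.1 e.2) | e <- route_arcs r].

Definition simple_cycle (r : seq nat) : Prop := uniq r.

(* virtual cycle: closed walk of a simple traversal of a tree: the undirected
   graph traversed (vertices = sites of r, edges = route_edges r; it is connected
   since it is traversed by a closed walk, and loop-free by simplicity) is a tree
   (connected with #edges = #vertices - 1), and each tree edge is traversed once in
   each direction. *)
Definition virtual_cycle (r : seq nat) : Prop :=
  size (route_edges r) = (size (undup r)).-1 /\
  (forall e, e \in route_arcs r -> (e.2, e.1) \in route_arcs r) /\
  uniq (route_arcs r) /\
  size r = 2 * size (route_edges r).

Definition irredundant_route (r : seq nat) : Prop :=
  simple_route r /\ (simple_cycle r \/ virtual_cycle r).

Definition irredundant (R : seq (seq nat)) : Prop :=
  forall c, c < size R -> irredundant_route (route R c).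

Definition is_start (R : seq (seq nat)) (s : nat) : Prop :=
  exists2 c, c < size R & pos R c 0 = s.

Definition realizable_walk (R : seq (seq nat)) (xs : seq nat) : Prop :=
  0 < size xs /\
  forall i, i < (size xs).-1 -> exists2 c, c < size R &
      pos R c i = nth 0 xs i /\ pos R c i.+1 = nth 0 xs i.+1.

Definition visits_all (n : nat) (xs : seq nat) : Prop :=
  forall x, x < n -> x \in xs.

Definition feasible (n : nat) (R : seq (seq nat)) : Prop :=
  forall c, c < size R -> exists xs, head 0 xs = pos R c 0 /\
     realizable_walk R xs /\ visits_all n xs.

(* A deterministic strategy: given the whole history of sites occupied so far
   (x_0 ... x_t, current site last; t is the current time), either ride carrier c
   (Some c) or halt (None).  With full knowledge of G_R this is the most general
   deterministic agent (everything else it could observe is determined by this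
   history and G_R). *)
Definition strategy := seq nat -> option nat.

(* The number of moves is (size xs).-1. *)
Definition execution (R : seq (seq nat)) (st : strategy) (xs : seq nat) : Prop :=
  0 < size xs /\
  (forall i, i < (size xs).-1 -> exists c, st (take i.+1 xs) = Some c /\
      c < size R /\ pos R c i = nth 0 xs i /\ pos R c i.+1 = nth 0 xs i.+1) /\
  st xs = None.

Definition solves (n : nat) (R : seq (seq nat)) (st : strategy) : Prop :=
  forall s, is_start R s -> exists xs, head 0 xs = s /\ execution R st xs /\ visits_all n xs.

(* M(G_R) >= b : every deterministic strategy solving PVG-Exploration performs
   at least b moves from some injection site (i.e. min over solving strategies of
   the max over injection sites of the number of moves is >= b) *)
Definition M_ge (n : nat) (R : seq (seq nat)) (b : nat) : Prop :=
  forall st : strategy, solves n R st ->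
    exists s xs, is_start R s /\ head 0 xs = s /\ execution R st xs /\ b <= (size xs).-1.

From mathcomp Require Import all_boot zify.
Set Implicit Arguments. Unset Strict Implicit. Unset Printing Implicit Defensive.

(* Every carrier tours a star with period 2(n-2): at even times it sits at its
   hub (c, or n-1 for the last carrier), at time 2j+1 at the leaf c+1+j mod (n-1).
   Such rotations never collide, but odd carriers swap two consecutive slots, so
   that carriers c and c+1 meet exactly once per period, at time 2(n-3-c)+1, and no
   other two carriers ever meet.  Site n-1 lies only on the last route, so an agent
   injected at the hub of carrier 0 must change carriers along 0, 1, ..., k-1; as
   the meeting times decrease with c, it loses almost a whole period on each
   carrier, which costs at least n(k-1) moves.  Riding along the same chain of
   meetings, one period per carrier, explores everything from any start. *)

Lemma route_arcsE (r : seq nat) :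
  route_arcs r =
    [seq (nth 0 r (i %% size r), nth 0 r (i.+1 %% size r)) | i <- iota 0 (size r)].
Proof. by []. Qed.

Lemma simple_route_of_arcs (r : seq nat) :
  uniq (route_arcs r) -> (forall e, e \in route_arcs r -> e.1 != e.2) -> simple_route r.
Proof.
set f := fun i => (nth 0 r (i %% size r), nth 0 r (i.+1 %% size r)).
have arcsE : route_arcs r = map f (iota 0 (size r)) := route_arcsE r.
have nth_arcs i : i < size r -> nth (0, 0) (route_arcs r) i = f i.
  by move=> lt_ir; rewrite arcsE (nth_map 0) ?size_iota // nth_iota.
have size_arcs : size (route_arcs r) = size r by rewrite arcsE size_map size_iota.
move=> arcs_uniq loopless; split.
- move=> i lt_ir eq_x; have lt_ia : i < size (route_arcs r) by rewrite size_arcs.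
  by have /loopless := mem_nth (0, 0) lt_ia; rewrite nth_arcs //= eq_x eqxx.
- move=> i j lt_ij lt_jr eq_x eq_x1.
  have lt_ia : i < size (route_arcs r) by rewrite size_arcs (ltn_trans lt_ij).
  have lt_ja : j < size (route_arcs r) by rewrite size_arcs.
  have := nth_uniq (0, 0) lt_ia lt_ja arcs_uniq.
  by rewrite !nth_arcs -?size_arcs // /f eq_x eq_x1 eqxx (ltn_eqF lt_ij).
Qed.

Definition star (z : nat) (ls : seq nat) : seq nat := flatten [seq [:: z; l] | l <- ls].
Definition star_arcs (z : nat) (ls : seq nat) : seq (nat * nat) :=
  flatten [seq [:: (z, l); (l, z)] | l <- ls].

Lemma size_star (z : nat) (ls : seq nat) : size (star z ls) = 2 * size ls.
Proof. by elim: ls => //= l ls' IH; rewrite IH mulnS. Qed.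

Lemma nth_star (z : nat) (ls : seq nat) j : j < 2 * size ls ->
  nth 0 (star z ls) j = if odd j then nth 0 ls j./2 else z.
Proof.
elim: ls j => [|l ls' IH] [|[|j]] //= lt_j.
by rewrite IH ?negbK //; rewrite mulnS ltnS ltnS in lt_j.
Qed.

Lemma nth_star_arcs (z : nat) (ls : seq nat) j : j < 2 * size ls ->
  nth (0, 0) (star_arcs z ls) j = if odd j then (nth 0 ls j./2, z) else (z, nth 0 ls j./2).
Proof.
elim: ls j => [|l ls' IH] [|[|j]] //= lt_j.
by rewrite IH ?negbK //; rewrite mulnS ltnS ltnS in lt_j.
Qed.

Lemma mem_star (z : nat) (ls : seq nat) x :
  0 < size ls -> (x \in star z ls) = (x == z) || (x \in ls).
Proof.
elim: ls => // l [|l' ls'] IH _; first by rewrite !inE.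
by rewrite /star /= in IH *; rewrite 2!in_cons IH // !inE; case: (x == z).
Qed.

Lemma mem_star_arcs (z : nat) (ls : seq nat) e :
  (e \in star_arcs z ls) = has (fun l => (e == (z, l)) || (e == (l, z))) ls.
Proof. by elim: ls => //= l ls' IH; rewrite !inE IH orbA. Qed.

Lemma route_arcs_star (z : nat) (ls : seq nat) :
  0 < size ls -> route_arcs (star z ls) = star_arcs z ls.
Proof.
move=> ls_gt0; have size_arcs : size (star_arcs z ls) = 2 * size ls.
  by elim: (ls) => //= l ls' IH; rewrite IH mulnS.
apply: (@eq_from_nth _ (0, 0)); rewrite route_arcsE size_map size_iota size_star //.
move=> i lt_i; rewrite (nth_map 0) ?size_iota // nth_iota // add0n nth_star_arcs //.
rewrite (modn_small lt_i) nth_star //.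
have [lt_i1 | ge_i1] := ltnP i.+1 (2 * size ls).
  rewrite (modn_small lt_i1) nth_star //= uphalf_half.
  by case: (odd i).
have last_i : i.+1 = 2 * size ls by lia.
have odd_i : odd i by lia.
by rewrite last_i modnn nth_star ?muln_gt0 // odd_i.
Qed.

Lemma star_arcsP (z : nat) (ls : seq nat) e :
  reflect (exists2 l, l \in ls & (e = (z, l)) \/ (e = (l, z))) (e \in star_arcs z ls).
Proof.
rewrite mem_star_arcs; apply: (iffP hasP) => [[l l_in /orP[]/eqP]|[l l_in [] ->]].
- by exists l => //; left.
- by exists l => //; right.
- by exists l => //; rewrite eqxx.
- by exists l => //; rewrite eqxx orbT.
Qed.

Lemma uniq_star_arcs (z : nat) (ls : seq nat) :
  uniq ls -> z \notin ls -> uniq (star_arcs z ls).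
Proof.
elim: ls => //= l ls' IH /andP[l_notin ls'_uniq].
rewrite inE negb_or => /andP[z_neq_l z_notin'].
rewrite -/(star_arcs z ls') IH // andbT inE negb_or xpair_eqE (negPf z_neq_l) /=.
by apply/andP; split; apply/negP => /star_arcsP[l' l'_in [] [] *]; subst;
  rewrite ?l'_in in l_notin z_notin'.
Qed.

Lemma star_arcs_loopless (z : nat) (ls : seq nat) e :
  z \notin ls -> e \in star_arcs z ls -> e.1 != e.2.
Proof.
move=> z_notin /star_arcsP[l l_in [] -> /=]; rewrite 1?(eq_sym l);
  by apply: contraNneq z_notin => ->.
Qed.

Lemma size_undup_star (z : nat) (ls : seq nat) :
  uniq ls -> z \notin ls -> 0 < size ls -> size (undup (star z ls)) = (size ls).+1.
Proof.
move=> ls_uniq z_notin ls_gt0.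
have undupE : perm_eq (undup (star z ls)) (z :: ls).
  apply: uniq_perm; rewrite ?undup_uniq //= ?z_notin //.
  by move=> x; rewrite mem_undup mem_star // inE.
by rewrite (perm_size undupE).
Qed.

Lemma size_route_edges_star (z : nat) (ls : seq nat) :
  uniq ls -> z \notin ls -> 0 < size ls -> size (route_edges (star z ls)) = size ls.
Proof.
move=> ls_uniq z_notin ls_gt0.
pose edge l := (minn z l, maxn z l).
have edge_inj : injective edge.
  move=> a b [] eq_min eq_max; apply/eqP.
  by rewrite -(eqn_add2l z) -!(addn_min_max z) eq_min eq_max.
have edgesE : perm_eq (route_edges (star z ls)) (map edge ls).
  apply: uniq_perm; rewrite ?undup_uniq ?map_inj_uniq // => e.
  rewrite mem_undup route_arcs_star //.
  apply/mapP/mapP => [[a /star_arcsP[l l_in [] ->] ->] | [l l_in ->]].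
  - by exists l.
  - by exists l => //=; rewrite minnC maxnC.
  - by exists (z, l) => //; apply/star_arcsP; exists l => //; left.
by rewrite (perm_size edgesE) size_map.
Qed.

Lemma irredundant_star (z : nat) (ls : seq nat) :
  uniq ls -> z \notin ls -> 0 < size ls -> irredundant_route (star z ls).
Proof.
move=> ls_uniq z_notin ls_gt0.
split; first by apply: simple_route_of_arcs; rewrite route_arcs_star //;
  [exact: uniq_star_arcs | move=> e; exact: star_arcs_loopless].
right; rewrite /virtual_cycle route_arcs_star // size_route_edges_star //.
split; first by rewrite size_undup_star.
split; last by rewrite uniq_star_arcs // size_star.
by move=> e /star_arcsP[l l_in [] -> /=]; apply/star_arcsP; exists l => //; [right|left].
Qed.

Lemma exists_mod_window m p r : r < p -> exists2 i, m <= i < m + p & i %% p = r.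
Proof.
move=> lt_rp; exists (m + (r + (p - m %% p)) %% p).
  by rewrite leq_addr ltn_add2l ltn_mod (leq_ltn_trans _ lt_rp).
have lt_mp : m %% p < p by rewrite ltn_mod (leq_ltn_trans _ lt_rp).
rewrite modnDmr {1}(divn_eq m p) -addnA modnMDl.
by move: (m %% p) lt_mp => a lt_ap; rewrite (_ : _ + _ = r + p) ?modnDr ?modn_small //; lia.
Qed.

Lemma pos_window R c m x : 0 < period R c -> x \in route R c ->
  exists2 i, m <= i < m + period R c & pos R c i = x.
Proof.
move=> p_gt0 x_in; have lt_x : index x (route R c) < period R c by rewrite index_mem.
have [i i_in i_mod] := exists_mod_window m lt_x.
by exists i => //; rewrite /pos i_mod nth_index.
Qed.

Definition valid_schedule (R : seq (seq nat)) (s : nat -> nat) (m : nat) : Prop :=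
  forall i, i < m -> s i < size R /\ pos R (s i) i.+1 = pos R (s i.+1) i.+1.

Definition schedule_walk (R : seq (seq nat)) (s : nat -> nat) (m : nat) : seq nat :=
  mkseq (fun i => pos R (s i) i) m.+1.

Lemma realizable_schedule_walk R s m :
  valid_schedule R s m -> realizable_walk R (schedule_walk R s m).
Proof.
move=> valid_s; split=> [|i]; rewrite size_mkseq // => lt_im.
have [lt_s meet] := valid_s i lt_im.
by exists (s i) => //; rewrite !nth_mkseq // ltnS ltnW.
Qed.

Definition ride_until (s : nat -> nat) (m t d i : nat) : nat :=
  if i < t then s (minn i m) else d.

Lemma ride_until_old s m t d i : i <= m -> m < t -> ride_until s m t d i = s i.
Proof.
by move=> le_im lt_mt; rewrite /ride_until (leq_ltn_trans le_im lt_mt) (minn_idPl le_im).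
Qed.

Lemma ride_until_current s m t d i : m <= i < t -> ride_until s m t d i = s m.
Proof. by case/andP=> le_mi lt_it; rewrite /ride_until lt_it (minn_idPr le_mi). Qed.

Lemma valid_ride_until R s m t d :
  valid_schedule R s m -> s m < size R -> m < t -> pos R (s m) t = pos R d t ->
  valid_schedule R (ride_until s m t d) t.
Proof.
move=> valid_s lt_sm lt_mt meet i lt_it; rewrite /ride_until lt_it.
have [lt_im | le_mi] := ltnP i m.
  by rewrite (leq_ltn_trans lt_im lt_mt) (minn_idPl lt_im); exact: valid_s.
split=> //.
have [lt_i1t | ge_i1t] := ltnP i.+1 t; first by rewrite (minn_idPr (leqW le_mi)).
by rewrite (_ : i.+1 = t) //; lia.
Qed.

Definition reaches (R : seq (seq nat)) (c0 d : nat) (V : nat -> Prop) : Prop :=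
  exists s m, [/\ s 0 = c0, s m = d, valid_schedule R s m &
    forall x, V x -> exists2 i, i <= m & pos R (s i) i = x].

Lemma reaches_start R c0 : reaches R c0 c0 (fun _ => False).
Proof. by exists (fun _ => c0), 0. Qed.

Lemma reaches_weaken R c0 d (V W : nat -> Prop) :
  (forall x, W x -> V x) -> reaches R c0 d V -> reaches R c0 d W.
Proof.
move=> WV [s [m [s0 sm valid_s visit]]].
by exists s, m; split=> // x /WV; exact: visit.
Qed.

Lemma reaches_switch R c0 c d V :
  reaches R c0 c V -> c < size R ->
  (forall m, exists2 t, m < t & pos R c t = pos R d t) -> reaches R c0 d V.
Proof.
move=> [s [m [s0 sm valid_s visit]]] lt_c meet; have [t lt_mt meet_t] := meet m.
exists (ride_until s m t d), t; split.
- by rewrite ride_until_old.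
- by rewrite /ride_until ltnn.
- by apply: valid_ride_until; rewrite ?sm.
- move=> x /visit[i le_im <-]; exists i; first exact: leq_trans le_im (ltnW lt_mt).
  by rewrite ride_until_old.
Qed.

Lemma reaches_cover R c0 c V :
  reaches R c0 c V -> c < size R -> 0 < period R c ->
  reaches R c0 c (fun x => V x \/ x \in route R c).
Proof.
move=> [s [m [s0 sm valid_s visit]]] lt_c p_gt0.
have lt_mt : m < m + period R c by lia.
exists (ride_until s m (m + period R c) c), (m + period R c); split.
- by rewrite ride_until_old.
- by rewrite /ride_until ltnn.
- by apply: valid_ride_until; rewrite ?sm.
- move=> x [/visit[i le_im <-] | x_in].
    by exists i; [exact: leq_trans le_im (ltnW lt_mt) | rewrite ride_until_old].
  have [i /andP[le_mi lt_it] <-] := pos_window m p_gt0 x_in.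
  by exists i; [exact: ltnW | rewrite ride_until_current ?le_mi ?sm].
Qed.

Lemma feasible_chain n R :
  (forall c, c < size R -> 0 < period R c) ->
  (forall c m, c.+1 < size R -> exists2 t, m < t & pos R c t = pos R c.+1 t) ->
  (forall x, x < n -> exists2 c, c < size R & x \in route R c) ->
  feasible n R.
Proof.
move=> p_gt0 meet cover c0 lt_c0.
have down j : j <= c0 -> reaches R c0 (c0 - j) (fun _ => False).
  elim: j => [|j IH] lt_j; first by rewrite subn0; exact: reaches_start.
  apply: reaches_switch (IH (ltnW lt_j)) _ _; first by rewrite (leq_ltn_trans (leq_subr _ _)).
  have -> : c0 - j = (c0 - j.+1).+1 by lia.
  move=> m; have [|t lt_mt meet_t] := meet (c0 - j.+1) m; first by lia.
  by exists t.
have up d : d < size R -> reaches R c0 d (fun x => exists2 e, e <= d & x \in route R e).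
  elim: d => [|d IH] lt_d.
    apply: reaches_weaken (reaches_cover _ lt_d (p_gt0 _ lt_d)); last first.
      by rewrite -[0](subnn c0); exact: down.
    by move=> x [e]; rewrite leqn0 => /eqP-> x_in; right.
  apply: reaches_weaken (reaches_cover _ lt_d (p_gt0 _ lt_d)); last first.
    by apply: reaches_switch (IH (ltnW lt_d)) (ltnW lt_d) _ => m; exact: meet.
  move=> x [e]; rewrite leq_eqVlt => /orP[/eqP-> x_in | lt_ed x_in]; [by right | left].
  by exists e.
have lt_last : (size R).-1 < size R by lia.
have [s [m [s0 _ valid_s visit]]] := up _ lt_last.
exists (schedule_walk R s m); split; first by rewrite /= s0.
split; first exact: realizable_schedule_walk.
move=> x lt_xn; have [c lt_c x_in] := cover x lt_xn.
have [|i le_im <-] := visit x; first by exists c => //; lia.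
by apply/mapP; exists i; rewrite // mem_iota.
Qed.

Lemma execution_realizable R st xs : execution R st xs -> realizable_walk R xs.
Proof. by case=> size_gt0 [step _]; split=> // i /step[c [_ [lt_c meet]]]; exists c. Qed.

Section Potential.
Variables (R : seq (seq nat)) (T : nat -> nat) (c0 : nat).
Hypotheses (lt_c0 : c0 < size R) (T_c0 : T c0 = 0).
Hypothesis T_meet : forall c d i, c < size R -> d < size R ->
  T c <= i -> pos R c i = pos R d i -> T d <= i.

Lemma realizable_potential xs : realizable_walk R xs -> head 0 xs = pos R c0 0 ->
  forall i, i < size xs -> exists2 c, c < size R & T c <= i /\ pos R c i = nth 0 xs i.
Proof.
case=> size_gt0 step head_xs; elim=> [|i IH] lt_i.
  by exists c0; rewrite // T_c0 -head_xs; case: (xs) size_gt0.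
have [c lt_c [le_Tc pos_c]] := IH (ltnW lt_i).
have [|d lt_d [pos_d pos_d1]] := step i; first by lia.
exists d => //; split=> //.
by apply: leqW; apply: T_meet lt_c lt_d le_Tc _; rewrite pos_c pos_d.
Qed.

Lemma M_ge_potential n b q : q < n ->
  (forall c i, c < size R -> T c <= i -> pos R c i = q -> b <= i) -> M_ge n R b.
Proof.
move=> lt_qn T_target st solves_st.
have start : is_start R (pos R c0 0) by exists c0.
have [xs [head_xs [exec_xs visits_xs]]] := solves_st _ start.
exists (pos R c0 0), xs; split=> //; split=> //; split=> //.
have q_in : q \in xs := visits_xs q lt_qn.
have lt_idx : index q xs < size xs by rewrite index_mem.
have [c lt_c [le_Tc pos_c]] :=
  realizable_potential (execution_realizable exec_xs) head_xs lt_idx.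
rewrite nth_index // in pos_c.
have := T_target c _ lt_c le_Tc pos_c; lia.
Qed.
End Potential.

Section Construction.
Variables n k : nat.
Hypotheses (n_ge4 : 4 <= n) (k_ge2 : 2 <= k) (k_le_half : k * 2 <= n).

(* The only deviation from the rotation: odd carriers swap the slots n-3-c and
   n-2-c, which puts c and c+1 on the same leaf at slot n-3-c and c-1 and c on the
   same leaf at slot n-2-c. *)
Definition slot c j :=
  if odd c && (j == n - 3 - c) then j.+1 else if odd c && (j == n - 2 - c) then j.-1 else j.

Definition leaf c j :=
  if c + 1 + slot c j < n.-1 then c + 1 + slot c j else c + 1 + slot c j - n.-1.

Lemma slot_cases c j : c < k ->
  [\/ slot c j = j /\ (~~ odd c \/ j + c + 3 != n /\ j + c + 2 != n),
      [/\ odd c, j + c + 3 = n & slot c j = j.+1]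
    | [/\ odd c, j + c + 2 = n & slot c j = j.-1]].
Proof.
move=> lt_ck; rewrite /slot; case: (boolP (odd c)) => [odd_c | even_c] /=.
  2: by constructor 1; split=> //; left.
case: eqP => [eq_j | ne_j]; first by constructor 2; split=> //; lia.
case: eqP => [eq_j | ne_j']; first by constructor 3; split=> //; lia.
by constructor 1; split=> //; right; split; apply/eqP; lia.
Qed.

Lemma leaf_cases c j :
  (c + 1 + slot c j < n.-1 /\ leaf c j = c + 1 + slot c j) \/
  (n.-1 <= c + 1 + slot c j /\ leaf c j + n.-1 = c + 1 + slot c j).
Proof. by rewrite /leaf; case: ltnP => ?; [left | right; split => //; lia]. Qed.

Ltac cases_lia := repeat match goal with
  | H : _ \/ _ |- _ => destruct H | H : _ /\ _ |- _ => destruct H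
  | H : or3 _ _ _ |- _ => destruct H | H : and3 _ _ _ |- _ => destruct H end; lia.

Lemma leaf_lt c j : c < k -> j < n - 2 -> leaf c j < n.-1.
Proof.
move=> lt_ck lt_j; have ? := slot_cases j lt_ck; have ? := leaf_cases c j; cases_lia.
Qed.

Lemma leaf_neq c j : c < k -> j < n - 2 -> leaf c j != c.
Proof.
move=> lt_ck lt_j; have ? := slot_cases j lt_ck; have ? := leaf_cases c j; cases_lia.
Qed.

Lemma leaf_inj c i j : c < k -> i < n - 2 -> j < n - 2 -> leaf c i = leaf c j -> i = j.
Proof.
move=> lt_ck lt_i lt_j; have ? := slot_cases i lt_ck; have ? := leaf_cases c i.
have ? := slot_cases j lt_ck; have ? := leaf_cases c j; cases_lia.
Qed.

Lemma leaf_meet c d j : c < d -> d < k -> j < n - 2 -> leaf c j = leaf d j ->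
  d = c.+1 /\ j = n - 3 - c.
Proof.
move=> lt_cd lt_dk lt_j; have lt_ck := ltn_trans lt_cd lt_dk.
have ? := slot_cases j lt_ck; have ? := leaf_cases c j.
have ? := slot_cases j lt_dk; have ? := leaf_cases d j; cases_lia.
Qed.

Lemma leaf_meet_next c : c.+1 < k -> leaf c (n - 3 - c) = leaf c.+1 (n - 3 - c).
Proof.
move=> lt_c1k; have lt_ck := ltnW lt_c1k.
have ? := slot_cases (n - 3 - c) lt_ck; have ? := leaf_cases c (n - 3 - c).
have ? := slot_cases (n - 3 - c) lt_c1k; have ? := leaf_cases c.+1 (n - 3 - c); cases_lia.
Qed.

Lemma leaf0 j : j < n - 2 -> leaf 0 j = j.+1.
Proof. by move=> lt_j; rewrite /leaf /slot /=; case: ifP => //; lia. Qed.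

Definition tour := 2 * (n - 2).

Lemma tour_gt0 : 0 < tour.
Proof. by rewrite /tour; lia. Qed.

Definition leaves c := mkseq (leaf c) (n - 2).
Definition hub c := if c == k.-1 then n.-1 else c.
Definition carrier_route c := star (hub c) (leaves c).
Definition routes := mkseq carrier_route k.
Definition meet_time c := 2 * (n - 3 - c) + 1.
(* Earliest time at which an agent injected at the hub of carrier 0 can ride c. *)
Definition arrival c := if c is c'.+1 then c' * tour + meet_time c' else 0.

Lemma hub_notin_leaves c : c < k -> hub c \notin leaves c.
Proof.
move=> lt_ck; apply/mapP=> -[j]; rewrite mem_iota /= => lt_j.
rewrite /hub; case: eqP => _ eq_hub.
- by have := leaf_lt lt_ck lt_j; rewrite -eq_hub ltnn.
- by move: (leaf_neq lt_ck lt_j); rewrite -eq_hub eqxx.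
Qed.

Lemma uniq_leaves c : c < k -> uniq (leaves c).
Proof.
move=> lt_ck; rewrite map_inj_in_uniq ?iota_uniq // => i j.
by rewrite !mem_iota /= => lt_i lt_j; apply: leaf_inj.
Qed.

Lemma half_mod_tour t : (t %% tour)./2 < n - 2.
Proof.
have : t %% tour < tour by rewrite ltn_mod tour_gt0.
by rewrite {2}/tour; lia.
Qed.

Lemma odd_mod_tour t : odd (t %% tour) = odd t.
Proof. by rewrite odd_mod // /tour oddM. Qed.

Lemma route_routes c : c < k -> route routes c = carrier_route c.
Proof. by move=> lt_ck; rewrite /route nth_mkseq. Qed.

Lemma period_routes c : c < k -> period routes c = tour.
Proof. by move=> lt_ck; rewrite /period route_routes // size_star size_mkseq. Qed.

Lemma pos_routes c t : c < k ->
  pos routes c t = if odd t then leaf c (t %% tour)./2 else hub c.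
Proof.
move=> lt_ck; have lt_t : t %% tour < 2 * size (leaves c).
  by rewrite size_mkseq ltn_mod tour_gt0.
rewrite /pos period_routes // route_routes // nth_star // odd_mod_tour.
by case: ifP => // _; rewrite nth_mkseq // half_mod_tour.
Qed.

Lemma hub_inj c d : c < k -> d < k -> hub c = hub d -> c = d.
Proof. by move=> lt_ck lt_dk; rewrite /hub; do 2 case: eqP => ?; lia. Qed.

Lemma pos_meet c d t : c < d -> d < k -> pos routes c t = pos routes d t ->
  d = c.+1 /\ t %% tour = meet_time c.
Proof.
move=> lt_cd lt_dk; have lt_ck := ltn_trans lt_cd lt_dk.
rewrite !pos_routes //; case: ifP => [odd_t | _ /(hub_inj lt_ck lt_dk)]; last by lia.
move=> /(leaf_meet lt_cd lt_dk (half_mod_tour t)) [-> eq_j]; split=> //.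
by move: odd_t; rewrite -odd_mod_tour /meet_time -eq_j; lia.
Qed.

Lemma pos_meet_time c t : c.+1 < k -> t %% tour = meet_time c ->
  pos routes c t = pos routes c.+1 t.
Proof.
move=> lt_c1k t_mod; rewrite !pos_routes ?(ltnW lt_c1k) // -odd_mod_tour t_mod.
have odd_mt : odd (meet_time c) by rewrite /meet_time; lia.
have half_mt : (meet_time c)./2 = n - 3 - c by rewrite /meet_time; lia.
by rewrite odd_mt half_mt leaf_meet_next.
Qed.
Lemma pos_target c t : c < k -> pos routes c t = n.-1 -> c = k.-1 /\ ~~ odd t.
Proof.
move=> lt_ck; rewrite pos_routes //; case: ifP => [_ eq_leaf | /negbT even_t].
  by have := leaf_lt lt_ck (half_mod_tour t); rewrite eq_leaf ltnn.
by rewrite /hub; case: eqP => // _; lia.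
Qed.

Lemma arrival_mono c : c.+1 < k -> arrival c <= arrival c.+1.
Proof. by case: c => //= c lt_ck; rewrite mulSn /meet_time /tour; lia. Qed.

Lemma arrival_meet c t : c.+1 < k -> arrival c <= t -> t %% tour = meet_time c ->
  arrival c.+1 <= t.
Proof.
move=> lt_c1k le_t t_mod; have t_eq := divn_eq t tour; rewrite t_mod in t_eq.
case: c lt_c1k le_t t_mod t_eq => [|c] lt_c1k le_t t_mod t_eq /=.
  by rewrite mul0n add0n -t_mod leq_mod.
move: (t %/ tour) t_eq le_t => q -> le_t.
have lt_cq : c < q.
  by rewrite -(ltn_pmul2r tour_gt0); move: le_t; rewrite /= /meet_time; lia.
by apply: leq_add => //; rewrite leq_mul2r lt_cq orbT.
Qed.

Lemma arrival_target t : arrival k.-1 <= t -> ~~ odd t -> n * (k - 1) <= t.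
Proof.
case: k k_ge2 k_le_half => [|[|k']] // _ le_k le_t even_t; rewrite /= in le_t.
have odd_arr : odd (k' * tour + meet_time k') by rewrite /tour /meet_time; lia.
have lt_t : k' * tour + meet_time k' < t.
  by rewrite ltn_neqAle le_t andbT; apply: contraNneq even_t => <-.
by move: lt_t; rewrite /tour /meet_time; nia.
Qed.

Lemma routes_cover x : x < n -> exists2 c, c < k & x \in route routes c.
Proof.
move=> lt_xn; have [lt_xn1 | ge_xn1] := ltnP x n.-1.
- exists 0; first by lia.
  rewrite route_routes; last by lia.
  rewrite mem_star ?size_mkseq; last by lia.
  have hub0 : hub 0 = 0 by rewrite /hub; case: eqP => //; lia.
  have [-> | x_gt0] := posnP x; first by rewrite hub0 eqxx.
  apply/orP; right; apply/mapP; exists x.-1; first by rewrite mem_iota; lia.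
  by rewrite leaf0; lia.
- exists k.-1; first by lia.
  rewrite route_routes ?mem_star ?size_mkseq; [|lia|lia].
  by rewrite /hub eqxx; apply/orP; left; apply/eqP; lia.
Qed.
Lemma size_routes : size routes = k.
Proof. exact: size_mkseq. Qed.

Lemma routes_PV_system : PV_system n routes k.
Proof.
split=> [|c lt_ck]; first exact: size_routes.
rewrite period_routes // route_routes //; split; first exact: tour_gt0.
apply/allP=> x; rewrite mem_star ?size_mkseq; last by lia.
case/orP=> [/eqP-> | /mapP[j]]; first by rewrite /hub; case: eqP => _; lia.
by rewrite mem_iota => lt_j ->; have := leaf_lt lt_ck lt_j; lia.
Qed.

Lemma routes_homogeneous : homogeneous routes.
Proof. by move=> c d; rewrite size_routes => lt_ck lt_dk; rewrite !period_routes. Qed.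

Lemma routes_irredundant : irredundant routes.
Proof.
move=> c; rewrite size_routes => lt_ck; rewrite route_routes //.
apply: irredundant_star; [exact: uniq_leaves | exact: hub_notin_leaves |].
by rewrite size_mkseq; lia.
Qed.

Lemma routes_feasible : feasible n routes.
Proof.
apply: feasible_chain => [c | c m | x]; rewrite ?size_routes.
- by move=> lt_ck; rewrite period_routes ?tour_gt0.
- move=> lt_c1k; have lt_mt : meet_time c < tour by rewrite /meet_time /tour; lia.
  have [t /andP[le_mt _] t_mod] := exists_mod_window m.+1 lt_mt.
  by exists t => //; apply: pos_meet_time.
- exact: routes_cover.
Qed.

Lemma routes_M_ge : M_ge n routes (n * (k - 1)).
Proof.
have [lt_0k lt_n1n] : 0 < k /\ n.-1 < n by split; lia.
apply: (@M_ge_potential routes arrival 0 _ _ _ n _ n.-1); rewrite ?size_routes //.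
- move=> c d i lt_ck lt_dk le_i meet_cd; have [lt_cd | lt_dc | <-] := ltngtP c d => //.
    have [eq_d i_mod] := pos_meet lt_cd lt_dk meet_cd; subst d.
    exact: arrival_meet.
  have [eq_c _] := pos_meet lt_dc lt_ck (esym meet_cd); subst c.
  exact: leq_trans (arrival_mono lt_ck) le_i.
- move=> c i lt_ck le_i /(pos_target lt_ck)[eq_c even_i]; subst c.
  exact: arrival_target.
Qed.
End Construction.

Theorem mainTheorem7 (n k : nat) :
  4 <= n -> 2 <= k -> k * 2 <= n ->
  exists R : seq (seq nat),
    [/\ PV_system n R k, homogeneous R, irredundant R, feasible n R &
        M_ge n R (n * (k - 1))].
Proof.
move=> n_ge4 k_ge2 k_le_half; exists (routes n k); split.
- exact: routes_PV_system.
- exact: routes_homogeneous.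
- exact: routes_irredundant.
- exact: routes_feasible.
- exact: routes_M_ge.
Qed.
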